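(* Let $E$ be a Banach lattice, $u_0\in E^+$, $\delta>0$, and let $D\subseteq (E^* )^+$ be such that $\langle u_0,x^*\rangle\ge\delta$ for all $x^*\in D$. If $D$ is almost order bounded with respect to $\rho_{u_0}$, then there exists $M\in\mathbb N$ such that every set of mutually disjoint elements of $D$ contains at most $M$ elements.
   Context: For $u_0\in E$, $\rho_{u_0}$ is the Riesz seminorm on $E^*$ given by $\rho_{u_0}(x^* )=\langle |u_0|,|x^*|\rangle$, and $B_{\rho_{u_0}}=\{x^*\in E^*:\rho_{u_0}(x^* )\le 1\}$. A set $D\subseteq E^*$ is almost order bounded with respect to $\rho_{u_0}$ if for every $\varepsilon>0$ there exists $y^*\in (E^* )^+$ with $D\subseteq[-y^*,y^*]+\varepsilon B_{\rho_{u_0}}$. *)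

From Stdlib Require Import Reals List.
Open Scope R_scope.

Record BanachLattice := {
  BL_carrier :> Type;
  bl_add : BL_carrier -> BL_carrier -> BL_carrier;
  bl_zero : BL_carrier;
  bl_opp : BL_carrier -> BL_carrier;
  bl_scal : R -> BL_carrier -> BL_carrier;
  bl_addA : forall x y z, bl_add x (bl_add y z) = bl_add (bl_add x y) z;
  bl_addC : forall x y, bl_add x y = bl_add y x;
  bl_add0 : forall x, bl_add x bl_zero = x;
  bl_addN : forall x, bl_add x (bl_opp x) = bl_zero;
  bl_scalA : forall a b x, bl_scal a (bl_scal b x) = bl_scal (a * b) x;
  bl_scal1 : forall x, bl_scal 1 x = x;
  bl_scalDr : forall a x y, bl_scal a (bl_add x y) = bl_add (bl_scal a x) (bl_scal a y);
  bl_scalDl : forall a b x, bl_scal (a + b) x = bl_add (bl_scal a x) (bl_scal b x);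
  bl_le : BL_carrier -> BL_carrier -> Prop;
  bl_le_refl : forall x, bl_le x x;
  bl_le_trans : forall x y z, bl_le x y -> bl_le y z -> bl_le x z;
  bl_le_anti : forall x y, bl_le x y -> bl_le y x -> x = y;
  bl_le_add : forall x y z, bl_le x y -> bl_le (bl_add x z) (bl_add y z);
  bl_le_scal : forall a x y, 0 <= a -> bl_le x y -> bl_le (bl_scal a x) (bl_scal a y);
  bl_join : BL_carrier -> BL_carrier -> BL_carrier;
  bl_join_ubl : forall x y, bl_le x (bl_join x y);
  bl_join_ubr : forall x y, bl_le y (bl_join x y);
  bl_join_least : forall x y z, bl_le x z -> bl_le y z -> bl_le (bl_join x y) z;
  bl_norm : BL_carrier -> R;
  bl_norm_eq0 : forall x, bl_norm x = 0 -> x = bl_zero;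
  bl_normZ : forall a x, bl_norm (bl_scal a x) = Rabs a * bl_norm x;
  bl_norm_triangle : forall x y, bl_norm (bl_add x y) <= bl_norm x + bl_norm y;
  bl_norm_lattice : forall x y,
      bl_le (bl_join x (bl_opp x)) (bl_join y (bl_opp y)) -> bl_norm x <= bl_norm y;
  bl_complete : forall u : nat -> BL_carrier,
      (forall eps, 0 < eps -> exists N, forall n m, (N <= n)%nat -> (N <= m)%nat ->
          bl_norm (bl_add (u n) (bl_opp (u m))) < eps) ->
      exists l, forall eps, 0 < eps -> exists N, forall n, (N <= n)%nat ->
          bl_norm (bl_add (u n) (bl_opp l)) < eps
}.

Arguments bl_add {_}. Arguments bl_zero {_}. Arguments bl_opp {_}.
Arguments bl_scal {_}. Arguments bl_le {_}. Arguments bl_join {_}.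
Arguments bl_norm {_}.

Definition bl_abs {E : BanachLattice} (x : E) : E := bl_join x (bl_opp x).

Definition is_dual {E : BanachLattice} (f : E -> R) : Prop :=
  (forall x y, f (bl_add x y) = f x + f y) /\
  (forall a x, f (bl_scal a x) = a * f x) /\
  (exists C, forall x, Rabs (f x) <= C * bl_norm x).

Definition dual_le {E : BanachLattice} (f g : E -> R) : Prop :=
  forall x : E, bl_le bl_zero x -> f x <= g x.

Definition dual_pos {E : BanachLattice} (f : E -> R) : Prop :=
  dual_le (fun _ => 0) f.

Definition is_dual_modulus {E : BanachLattice} (f m : E -> R) : Prop :=
  is_dual m /\ dual_le f m /\ dual_le (fun x => - f x) m /\
  (forall g, is_dual g -> dual_le f g -> dual_le (fun x => - f x) g -> dual_le m g).

(** rho_{u0}(f) <= r, where rho_{u0}(f) = <|u0|, |f|>. *)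
Definition rho_le {E : BanachLattice} (u0 : E) (f : E -> R) (r : R) : Prop :=
  exists m, is_dual_modulus f m /\ m (bl_abs u0) <= r.

(** D is almost order bounded w.r.t. rho_{u0}:
    forall eps > 0, exists y in (E^* )^+, D subset [-y,y] + eps B_{rho_{u0}}. *)
Definition almost_order_bounded {E : BanachLattice} (u0 : E) (D : (E -> R) -> Prop) : Prop :=
  forall eps, 0 < eps ->
    exists y, is_dual y /\ dual_pos y /\
      forall x, D x ->
        exists z b, is_dual z /\ is_dual b /\
          dual_le (fun v => - y v) z /\ dual_le z y /\
          rho_le u0 b 1 /\
          (forall v, x v = z v + eps * b v).

(** Disjointness in E^*: |f| /\ |g| = 0 (0 is the infimum of {|f|,|g|} in E^* ). *)
Definition dual_disjoint {E : BanachLattice} (f g : E -> R) : Prop :=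
  exists mf mg, is_dual_modulus f mf /\ is_dual_modulus g mg /\
    dual_pos mf /\ dual_pos mg /\
    (forall h, is_dual h -> dual_le h mf -> dual_le h mg -> dual_le h (fun _ => 0)).

(* Set eps = delta/2 and take y >= 0 with D ⊆ [-y, y] + eps B. For f in D, writing f = z + eps b
   shows f - eps |b| <= f ∧ y, so f(u0) <= (f ∧ y)(u0) + delta/2 and hence (f ∧ y)(u0) >= delta/2.
   For mutually disjoint f_1, ..., f_n in D the functionals f_i ∧ y are disjoint pieces below y,
   so their sum is at most y; evaluating at u0 gives n delta/2 <= y(u0).  The meets exist in E^*
   by the Riesz–Kantorovich formula (f ∧ g)(u) = inf {f v + g (u - v) : 0 <= v <= u}. *)
From Stdlib Require Import Reals List Lra ClassicalEpsilon.
Open Scope R_scope.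

#[local] Arguments bl_addA {_}.
#[local] Arguments bl_addC {_}.
#[local] Arguments bl_add0 {_}.
#[local] Arguments bl_addN {_}.
#[local] Arguments bl_scalA {_}.
#[local] Arguments bl_scal1 {_}.
#[local] Arguments bl_scalDr {_}.
#[local] Arguments bl_scalDl {_}.
#[local] Arguments bl_le_refl {_}.
#[local] Arguments bl_le_trans {_}.
#[local] Arguments bl_le_anti {_}.
#[local] Arguments bl_le_add {_}.
#[local] Arguments bl_le_scal {_}.
#[local] Arguments bl_join_ubl {_}.
#[local] Arguments bl_join_ubr {_}.
#[local] Arguments bl_join_least {_}.
#[local] Arguments bl_normZ {_}.
#[local] Arguments bl_norm_triangle {_}.
#[local] Arguments bl_norm_lattice {_}.

Local Infix "⊕" := bl_add (at level 50, left associativity).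
Local Notation "⊖ x" := (bl_opp x) (at level 35, right associativity).
Local Infix "≼" := bl_le (at level 70).

Section VectorLattice.
Context {E : BanachLattice}.
Implicit Types a b c d x y u v : E.

Lemma add0l x : bl_zero ⊕ x = x.
Proof. rewrite bl_addC; apply bl_add0. Qed.

Lemma addNl x : ⊖x ⊕ x = bl_zero.
Proof. rewrite bl_addC; apply bl_addN. Qed.

Lemma addK x y : x ⊕ y ⊕ ⊖y = x.
Proof. rewrite <- bl_addA, bl_addN, bl_add0; reflexivity. Qed.

Lemma addNK x y : x ⊕ ⊖y ⊕ y = x.
Proof. rewrite <- bl_addA, addNl, bl_add0; reflexivity. Qed.

Lemma addKl x y : ⊖x ⊕ (x ⊕ y) = y.
Proof. rewrite bl_addA, addNl, add0l; reflexivity. Qed.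

Lemma opp_unique x y : x ⊕ y = bl_zero -> y = ⊖x.
Proof. intro H. rewrite <- (addKl x y), H, bl_add0; reflexivity. Qed.

Lemma oppK x : ⊖⊖x = x.
Proof. symmetry; apply opp_unique, addNl. Qed.

Lemma opp0 : ⊖(@bl_zero E) = bl_zero.
Proof. symmetry; apply opp_unique, bl_add0. Qed.

Lemma addACA a b c d : a ⊕ b ⊕ (c ⊕ d) = a ⊕ c ⊕ (b ⊕ d).
Proof. rewrite <- !bl_addA. f_equal. rewrite !bl_addA, (bl_addC b c); reflexivity. Qed.

Lemma oppD x y : ⊖(x ⊕ y) = ⊖x ⊕ ⊖y.
Proof. symmetry; apply opp_unique. rewrite addACA, !bl_addN, bl_add0; reflexivity. Qed.

Lemma addAC a b c : a ⊕ b ⊕ c = a ⊕ c ⊕ b.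
Proof. rewrite <- !bl_addA, (bl_addC b c); reflexivity. Qed.

Lemma le_add a b c d : a ≼ b -> c ≼ d -> a ⊕ c ≼ b ⊕ d.
Proof.
  intros Hab Hcd. apply bl_le_trans with (b ⊕ c); [now apply bl_le_add|].
  rewrite (bl_addC b c), (bl_addC b d). now apply bl_le_add.
Qed.

Lemma le_add2l c a b : a ≼ b -> c ⊕ a ≼ c ⊕ b.
Proof. intro; apply le_add; auto using bl_le_refl. Qed.

Lemma le_subl_add c a z : c ⊕ a ≼ z -> a ≼ ⊖c ⊕ z.
Proof. intro H. pose proof (le_add2l (⊖c) _ _ H) as H1. now rewrite addKl in H1. Qed.

Lemma le_opp x y : x ≼ y -> ⊖y ≼ ⊖x.
Proof.
  intro H. pose proof (bl_le_add _ _ (⊖x ⊕ ⊖y) H) as H1.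
  rewrite bl_addA, bl_addN, add0l, (bl_addC (⊖x) (⊖y)), bl_addA, bl_addN, add0l in H1.
  exact H1.
Qed.

Lemma opp_le0 x : bl_zero ≼ x -> ⊖x ≼ bl_zero.
Proof. intro H. rewrite <- opp0. now apply le_opp. Qed.

Lemma subr_ge0 x y : x ≼ y -> bl_zero ≼ y ⊕ ⊖x.
Proof. intro H. pose proof (bl_le_add _ _ (⊖x) H) as H1. now rewrite bl_addN in H1. Qed.

Lemma add_ge0 a b : bl_zero ≼ a -> bl_zero ≼ b -> bl_zero ≼ a ⊕ b.
Proof. intros. rewrite <- (bl_add0 bl_zero). now apply le_add. Qed.

Lemma join_comm x y : bl_join x y = bl_join y x.
Proof. apply bl_le_anti; apply bl_join_least; auto using bl_join_ubl, bl_join_ubr. Qed.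

Lemma addr_join c a b : c ⊕ bl_join a b = bl_join (c ⊕ a) (c ⊕ b).
Proof.
  apply bl_le_anti.
  - assert (H : bl_join a b ≼ ⊖c ⊕ bl_join (c ⊕ a) (c ⊕ b)).
    { apply bl_join_least; apply le_subl_add; auto using bl_join_ubl, bl_join_ubr. }
    pose proof (le_add2l c _ _ H) as H1. now rewrite bl_addA, bl_addN, add0l in H1.
  - apply bl_join_least; apply le_add2l; auto using bl_join_ubl, bl_join_ubr.
Qed.

Definition pos_part x := bl_join x bl_zero.
Definition neg_part x := bl_join (⊖x) bl_zero.

Lemma pos_part_ge0 x : bl_zero ≼ pos_part x.
Proof. apply bl_join_ubr. Qed.

Lemma neg_part_ge0 x : bl_zero ≼ neg_part x.
Proof. apply bl_join_ubr. Qed.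

(* x⁺ = x + x⁻ because translation commutes with joins. *)
Lemma pos_neg_decomp x : pos_part x ⊕ ⊖ neg_part x = x.
Proof.
  assert (H : pos_part x = x ⊕ neg_part x).
  { unfold pos_part, neg_part. rewrite addr_join, bl_addN, bl_add0, join_comm; reflexivity. }
  rewrite H, addK; reflexivity.
Qed.

Lemma scaler0 (r : R) : bl_scal r (@bl_zero E) = bl_zero.
Proof.
  assert (H : bl_scal r bl_zero ⊕ bl_scal r bl_zero = bl_scal r (@bl_zero E)).
  { rewrite <- bl_scalDr, bl_add0; reflexivity. }
  rewrite <- (addK (bl_scal r bl_zero) (bl_scal r bl_zero)) at 1. rewrite H, bl_addN; reflexivity.
Qed.

Lemma scale0r x : bl_scal 0 x = bl_zero.
Proof.
  assert (H : bl_scal 0 x ⊕ bl_scal 0 x = bl_scal 0 x).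
  { rewrite <- bl_scalDl, Rplus_0_r; reflexivity. }
  rewrite <- (addK (bl_scal 0 x) (bl_scal 0 x)) at 1. rewrite H, bl_addN; reflexivity.
Qed.

Lemma scalerN (r : R) x : bl_scal r (⊖x) = ⊖ bl_scal r x.
Proof. apply opp_unique. rewrite <- bl_scalDr, bl_addN, scaler0; reflexivity. Qed.

Lemma scaleNr (r : R) x : bl_scal (-r) x = ⊖ bl_scal r x.
Proof. apply opp_unique. rewrite <- bl_scalDl, Rplus_opp_r, scale0r; reflexivity. Qed.

Lemma scale_ge0 (r : R) u : 0 <= r -> bl_zero ≼ u -> bl_zero ≼ bl_scal r u.
Proof. intros. rewrite <- (scaler0 r). now apply bl_le_scal. Qed.

Lemma norm_ge0 x : 0 <= bl_norm x.
Proof.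
  pose proof (bl_norm_triangle x (bl_scal (-1) x)) as H.
  rewrite <- (bl_scal1 x) in H at 1. rewrite <- bl_scalDl, Rplus_opp_r, scale0r in H.
  rewrite <- (scaler0 0), !bl_normZ, Rabs_R0, Rabs_left in H by lra. lra.
Qed.

Lemma ge0_double a : bl_zero ≼ a ⊕ a -> bl_zero ≼ a.
Proof.
  intro H. assert (H2 : a ⊕ a = bl_scal 2 a).
  { replace 2 with (1 + 1) by lra. rewrite bl_scalDl, bl_scal1; reflexivity. }
  rewrite H2 in H. pose proof (bl_le_scal (/2) _ _ ltac:(lra) H) as H3.
  rewrite scaler0, bl_scalA, Rinv_l, bl_scal1 in H3; lra || exact H3.
Qed.

Lemma abs_ge0 x : bl_zero ≼ bl_abs x.
Proof.
  unfold bl_abs. apply ge0_double. rewrite <- (bl_addN x). apply le_add; auto using bl_join_ubl, bl_join_ubr.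
Qed.

Lemma abs_of_ge0 u : bl_zero ≼ u -> bl_abs u = u.
Proof.
  intro H. apply bl_le_anti; [|apply bl_join_ubl].
  apply bl_join_least; [apply bl_le_refl|]. apply bl_le_trans with bl_zero; auto using opp_le0.
Qed.

Lemma norm_pos_part x : bl_norm (pos_part x) <= bl_norm x.
Proof.
  apply bl_norm_lattice. apply bl_join_least.
  - apply bl_join_least; [apply bl_join_ubl | apply abs_ge0].
  - apply bl_le_trans with bl_zero; [apply opp_le0, pos_part_ge0 | apply abs_ge0].
Qed.

Lemma norm_neg_part x : bl_norm (neg_part x) <= bl_norm x.
Proof.
  apply bl_norm_lattice. apply bl_join_least.
  - apply bl_join_least; [apply bl_join_ubr | apply abs_ge0].
  - apply bl_le_trans with bl_zero; [apply opp_le0, neg_part_ge0 | apply abs_ge0].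
Qed.

Lemma riesz_decomposition v u1 u2 :
  bl_zero ≼ v -> bl_zero ≼ u1 -> bl_zero ≼ u2 -> v ≼ u1 ⊕ u2 ->
  exists v1 v2, bl_zero ≼ v1 /\ v1 ≼ u1 /\ bl_zero ≼ v2 /\ v2 ≼ u2 /\ v = v1 ⊕ v2.
Proof.
  intros pv p1 p2 Hv.
  set (v2 := bl_join bl_zero (v ⊕ ⊖u1)).
  exists (v ⊕ ⊖v2), v2.
  assert (Hd : v ⊕ ⊖u1 ≼ v2) by apply bl_join_ubr.
  assert (Hv2v : v2 ≼ v).
  { apply bl_join_least; auto.
    rewrite <- (bl_add0 v) at 2. apply le_add2l, opp_le0, p1. }
  split; [|split; [|split; [|split]]].
  - now apply subr_ge0.
  - pose proof (le_add2l v _ _ (le_opp _ _ Hd)) as H.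
    now rewrite oppD, oppK, bl_addA, bl_addN, add0l in H.
  - apply bl_join_ubl.
  - apply bl_join_least; auto.
    pose proof (bl_le_add _ _ (⊖u1) Hv) as H. now rewrite (bl_addC u1 u2), addK in H.
  - now rewrite addNK.
Qed.

End VectorLattice.

Section DualSpace.
Context {E : BanachLattice}.

Definition pos_dual (f : E -> R) := is_dual f /\ dual_pos f.

Lemma dual_add (f : E -> R) : is_dual f -> forall x y, f (x ⊕ y) = f x + f y.
Proof. intros [H _]; exact H. Qed.

Lemma dual_scale (f : E -> R) : is_dual f -> forall a x, f (bl_scal a x) = a * f x.
Proof. intros [_ [H _]]; exact H. Qed.

Lemma dual0 (f : E -> R) : is_dual f -> f bl_zero = 0.
Proof. intro Hf. pose proof (dual_add f Hf bl_zero bl_zero) as H. rewrite bl_add0 in H. lra. Qed.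

Lemma dual_opp (f : E -> R) : is_dual f -> forall x, f (⊖x) = - f x.
Proof. intros Hf x. pose proof (dual_add f Hf x (⊖x)) as H. rewrite bl_addN, dual0 in H by exact Hf. lra. Qed.

Lemma dual_ext (f g : E -> R) : (forall v, f v = g v) -> is_dual f -> is_dual g.
Proof.
  intros Heq [H1 [H2 [C H3]]]. split; [|split].
  - intros; rewrite <- !Heq; auto.
  - intros; rewrite <- !Heq; auto.
  - exists C; intros; rewrite <- Heq; auto.
Qed.

Lemma dual_lincomb (f g : E -> R) (a b : R) :
  is_dual f -> is_dual g -> is_dual (fun v => a * f v + b * g v).
Proof.
  intros Hf Hg. pose proof Hf as [_ [_ [Cf HCf]]]. pose proof Hg as [_ [_ [Cg HCg]]].
  split; [|split].
  - intros x y. rewrite (dual_add f Hf), (dual_add g Hg). ring.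
  - intros c x. rewrite (dual_scale f Hf), (dual_scale g Hg). ring.
  - exists (Rabs a * Cf + Rabs b * Cg). intros x.
    eapply Rle_trans; [apply Rabs_triang|]. rewrite !Rabs_mult.
    pose proof (Rmult_le_compat_l _ _ _ (Rabs_pos a) (HCf x)).
    pose proof (Rmult_le_compat_l _ _ _ (Rabs_pos b) (HCg x)). lra.
Qed.

Lemma dual_sub (f g : E -> R) : is_dual f -> is_dual g -> is_dual (fun v => f v - g v).
Proof.
  intros Hf Hg. apply dual_ext with (fun v => 1 * f v + (-1) * g v);
    [intro; ring | now apply dual_lincomb].
Qed.

Lemma dual_modulus_ge0 (f m : E -> R) : is_dual_modulus f m -> dual_pos m.
Proof. intros [_ [Hfm [Hfm' _]]] v pv. pose proof (Hfm v pv). pose proof (Hfm' v pv). simpl in *. lra. Qed.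

End DualSpace.

Ltac dual_simpl Hf Hg :=
  rewrite ?(dual_add _ Hf), ?(dual_opp _ Hf), ?(dual_add _ Hg), ?(dual_opp _ Hg),
    ?(dual_scale _ Hf), ?(dual_scale _ Hg), ?(dual0 _ Hf), ?(dual0 _ Hg) in *.

Section RieszKantorovich.
Context {E : BanachLattice} (f g : E -> R).
Hypotheses (Pf : pos_dual f) (Pg : pos_dual g).

Definition is_rk_inf (u : E) (m : R) :=
  (forall v, bl_zero ≼ v -> v ≼ u -> m <= f v + g (u ⊕ ⊖v)) /\
  (forall r, (forall v, bl_zero ≼ v -> v ≼ u -> r <= f v + g (u ⊕ ⊖v)) -> r <= m).

Definition rk_inf (u : E) : R := epsilon (inhabits 0) (is_rk_inf u).

Lemma rk_inf_exists u : bl_zero ≼ u -> exists m, is_rk_inf u m.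
Proof.
  destruct Pf as [_ Hfp], Pg as [_ Hgp]. intro pu.
  set (T := fun r => exists v, bl_zero ≼ v /\ v ≼ u /\ r = -(f v + g (u ⊕ ⊖v))).
  assert (Hb : bound T).
  { exists 0. intros r [v [pv [vu ->]]].
    pose proof (Hfp v pv). pose proof (Hgp _ (subr_ge0 _ _ vu)). simpl in *. lra. }
  assert (Hne : exists r, T r) by (exists (-(f bl_zero + g (u ⊕ ⊖bl_zero))), bl_zero; auto using bl_le_refl).
  destruct (completeness T Hb Hne) as [L [Hub Hl]].
  exists (-L). split.
  - intros v pv vu. assert (T (-(f v + g (u ⊕ ⊖v)))) by (exists v; auto).
    pose proof (Hub _ H). lra.
  - intros r Hr. assert (L <= -r); [|lra].
    apply Hl. intros x [v [pv [vu ->]]]. pose proof (Hr v pv vu). lra.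
Qed.

Lemma rk_inf_lb u v : bl_zero ≼ u -> bl_zero ≼ v -> v ≼ u -> rk_inf u <= f v + g (u ⊕ ⊖v).
Proof. intros pu. apply (proj1 (epsilon_spec _ _ (rk_inf_exists u pu))). Qed.

Lemma rk_inf_glb u r : bl_zero ≼ u ->
  (forall v, bl_zero ≼ v -> v ≼ u -> r <= f v + g (u ⊕ ⊖v)) -> r <= rk_inf u.
Proof. intros pu. apply (proj2 (epsilon_spec _ _ (rk_inf_exists u pu))). Qed.

Lemma rk_inf_le_l u : bl_zero ≼ u -> rk_inf u <= f u.
Proof.
  intro pu. pose proof (rk_inf_lb u u pu pu (bl_le_refl u)) as H.
  rewrite bl_addN, (dual0 g (proj1 Pg)) in H. lra.
Qed.

Lemma rk_inf_le_r u : bl_zero ≼ u -> rk_inf u <= g u.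
Proof.
  intro pu. pose proof (rk_inf_lb u bl_zero pu (bl_le_refl _) pu) as H.
  rewrite opp0, bl_add0, (dual0 f (proj1 Pf)) in H. lra.
Qed.

Lemma rk_inf_ge0 u : bl_zero ≼ u -> 0 <= rk_inf u.
Proof.
  intro pu. apply rk_inf_glb; auto. intros v pv vu.
  pose proof (proj2 Pf v pv). pose proof (proj2 Pg _ (subr_ge0 _ _ vu)). simpl in *. lra.
Qed.

(* [<=] combines decompositions of u1 and u2; [>=] splits 0 <= v <= u1 + u2 by Riesz decomposition. *)
Lemma rk_inf_add u1 u2 : bl_zero ≼ u1 -> bl_zero ≼ u2 ->
  rk_inf (u1 ⊕ u2) = rk_inf u1 + rk_inf u2.
Proof.
  pose proof (proj1 Pf) as Hf. pose proof (proj1 Pg) as Hg. intros p1 p2.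
  pose proof (add_ge0 _ _ p1 p2) as p12.
  apply Rle_antisym.
  - assert (Hsplit : forall v2, bl_zero ≼ v2 -> v2 ≼ u2 ->
        rk_inf (u1 ⊕ u2) - (f v2 + g (u2 ⊕ ⊖v2)) <= rk_inf u1).
    { intros v2 q2 l2. apply rk_inf_glb; auto. intros v1 q1 l1.
      pose proof (rk_inf_lb _ (v1 ⊕ v2) p12 (add_ge0 _ _ q1 q2) (le_add _ _ _ _ l1 l2)) as H.
      rewrite oppD in H. dual_simpl Hf Hg. lra. }
    assert (rk_inf (u1 ⊕ u2) - rk_inf u1 <= rk_inf u2); [|lra].
    apply rk_inf_glb; auto. intros v2 q2 l2. pose proof (Hsplit v2 q2 l2). lra.
  - apply rk_inf_glb; auto. intros v pv vu.
    destruct (riesz_decomposition v u1 u2 pv p1 p2 vu) as [v1 [v2 [q1 [l1 [q2 [l2 ->]]]]]].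
    pose proof (rk_inf_lb u1 v1 p1 q1 l1). pose proof (rk_inf_lb u2 v2 p2 q2 l2).
    rewrite oppD. dual_simpl Hf Hg. lra.
Qed.

Lemma rk_inf0 : rk_inf bl_zero = 0.
Proof.
  pose proof (rk_inf_add bl_zero bl_zero (bl_le_refl _) (bl_le_refl _)) as H.
  rewrite bl_add0 in H. lra.
Qed.

Lemma rk_inf_scale (a : R) u : 0 < a -> bl_zero ≼ u -> rk_inf (bl_scal a u) = a * rk_inf u.
Proof.
  pose proof (proj1 Pf) as Hf. pose proof (proj1 Pg) as Hg. intros Ha pu.
  assert (Hia : 0 < / a) by now apply Rinv_0_lt_compat.
  pose proof (scale_ge0 a u ltac:(lra) pu) as pau.
  apply Rle_antisym.
  - assert (rk_inf (bl_scal a u) * / a <= rk_inf u).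
    { apply rk_inf_glb; auto. intros v pv vu.
      pose proof (rk_inf_lb _ (bl_scal a v) pau (scale_ge0 a v ltac:(lra) pv)
                   (bl_le_scal a _ _ ltac:(lra) vu)) as H.
      dual_simpl Hf Hg.
      apply Rmult_le_reg_l with a; auto.
      replace (a * (rk_inf (bl_scal a u) * / a)) with (rk_inf (bl_scal a u)) by (field; lra).
      lra. }
    apply Rmult_le_reg_l with (/ a); auto.
    replace (/ a * (a * rk_inf u)) with (rk_inf u) by (field; lra). lra.
  - apply rk_inf_glb; auto. intros w pw wu.
    assert (pv : bl_zero ≼ bl_scal (/a) w) by (apply scale_ge0; auto; lra).
    assert (vu : bl_scal (/a) w ≼ u).
    { pose proof (bl_le_scal (/a) _ _ ltac:(lra) wu) as H.
      rewrite bl_scalA, Rinv_l, bl_scal1 in H; lra || exact H. }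
    pose proof (rk_inf_lb u _ pu pv vu) as H. dual_simpl Hf Hg.
    pose proof (Rmult_le_compat_l a _ _ ltac:(lra) H) as H1.
    replace (a * (/ a * f w + (g u + - (/ a * g w)))) with (f w + (a * g u + - g w)) in H1
      by (field; lra).
    lra.
Qed.

Definition rk_meet (x : E) : R := rk_inf (pos_part x) - rk_inf (neg_part x).

Lemma rk_meet_repr p q x : bl_zero ≼ p -> bl_zero ≼ q -> p ⊕ ⊖q = x ->
  rk_meet x = rk_inf p - rk_inf q.
Proof.
  intros pp pq Hx. unfold rk_meet.
  assert (Heq : pos_part x ⊕ q = p ⊕ neg_part x).
  { rewrite <- (addNK (pos_part x) (neg_part x)), pos_neg_decomp, addAC.
    rewrite <- Hx at 1. now rewrite addNK. }
  pose proof (rk_inf_add _ q (pos_part_ge0 x) pq) as H1.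
  pose proof (rk_inf_add p _ pp (neg_part_ge0 x)) as H2.
  rewrite Heq in H1. lra.
Qed.

Lemma rk_meet_ge0 u : bl_zero ≼ u -> rk_meet u = rk_inf u.
Proof.
  intro pu. rewrite (rk_meet_repr u bl_zero u pu (bl_le_refl _)), rk_inf0; [lra|].
  now rewrite opp0, bl_add0.
Qed.

Lemma rk_meet_add x y : rk_meet (x ⊕ y) = rk_meet x + rk_meet y.
Proof.
  rewrite (rk_meet_repr (pos_part x ⊕ pos_part y) (neg_part x ⊕ neg_part y)).
  - rewrite !rk_inf_add; auto using pos_part_ge0, neg_part_ge0. unfold rk_meet. lra.
  - apply add_ge0; apply pos_part_ge0.
  - apply add_ge0; apply neg_part_ge0.
  - now rewrite oppD, addACA, !pos_neg_decomp.
Qed.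

Lemma rk_meet_opp x : rk_meet (⊖x) = - rk_meet x.
Proof.
  rewrite (rk_meet_repr (neg_part x) (pos_part x)); auto using pos_part_ge0, neg_part_ge0.
  - unfold rk_meet. ring.
  - rewrite <- (pos_neg_decomp x) at 3. now rewrite oppD, oppK, bl_addC.
Qed.

Lemma rk_meet_scale_ge0 (a : R) x : 0 <= a -> rk_meet (bl_scal a x) = a * rk_meet x.
Proof.
  intro Ha. destruct (Req_dec a 0) as [->|Ha0].
  - rewrite scale0r, rk_meet_ge0, rk_inf0 by apply bl_le_refl. ring.
  - rewrite (rk_meet_repr (bl_scal a (pos_part x)) (bl_scal a (neg_part x))).
    + rewrite !rk_inf_scale by (auto using pos_part_ge0, neg_part_ge0; lra). unfold rk_meet. ring.
    + apply scale_ge0; auto using pos_part_ge0.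
    + apply scale_ge0; auto using neg_part_ge0.
    + now rewrite <- scalerN, <- bl_scalDr, pos_neg_decomp.
Qed.

Lemma rk_meet_scale (a : R) x : rk_meet (bl_scal a x) = a * rk_meet x.
Proof.
  destruct (Rle_lt_dec 0 a) as [Ha|Ha]; [now apply rk_meet_scale_ge0|].
  replace a with (- - a) by ring.
  rewrite scaleNr, rk_meet_opp, rk_meet_scale_ge0 by lra. ring.
Qed.

Lemma rk_meet_bounded : exists C, forall x, Rabs (rk_meet x) <= C * bl_norm x.
Proof.
  destruct (proj1 Pf) as [_ [_ [C HC]]]. exists (2 * Rabs C). intro x.
  assert (Hpart : forall w, bl_zero ≼ w -> bl_norm w <= bl_norm x ->
             0 <= rk_inf w <= Rabs C * bl_norm x).
  { intros w pw Hw. split; [now apply rk_inf_ge0|].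
    pose proof (rk_inf_le_l w pw). pose proof (Rle_abs (f w)). pose proof (HC w).
    pose proof (Rmult_le_compat_r _ _ _ (norm_ge0 w) (Rle_abs C)).
    pose proof (Rmult_le_compat_l _ _ _ (Rabs_pos C) Hw). lra. }
  pose proof (Hpart _ (pos_part_ge0 x) (norm_pos_part x)).
  pose proof (Hpart _ (neg_part_ge0 x) (norm_neg_part x)).
  unfold rk_meet. apply Rabs_le. lra.
Qed.

Lemma rk_meet_is_dual : is_dual rk_meet.
Proof.
  split; [exact rk_meet_add | split; [exact rk_meet_scale | exact rk_meet_bounded]].
Qed.

Lemma rk_meet_le_l : dual_le rk_meet f.
Proof. intros u pu. rewrite rk_meet_ge0 by exact pu. now apply rk_inf_le_l. Qed.

Lemma rk_meet_le_r : dual_le rk_meet g.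
Proof. intros u pu. rewrite rk_meet_ge0 by exact pu. now apply rk_inf_le_r. Qed.

Lemma rk_meet_greatest (k : E -> R) : is_dual k -> dual_le k f -> dual_le k g -> dual_le k rk_meet.
Proof.
  intros Hk Hkf Hkg u pu. rewrite rk_meet_ge0 by exact pu. apply rk_inf_glb; auto.
  intros v pv vu. pose proof (Hkf v pv). pose proof (Hkg _ (subr_ge0 _ _ vu)).
  rewrite (dual_add _ Hk), (dual_opp _ Hk) in *. simpl in *.
  replace (k u) with (k v + (k u + - k v)) by ring. lra.
Qed.

End RieszKantorovich.

Section DisjointMeets.
Context {E : BanachLattice}.

(* f ∧ y + g ∧ y - y lies below both |f| and |g|, hence below their infimum 0. *)
Lemma disjoint_meet_le_sub (f g y : E -> R) :
  pos_dual f -> pos_dual g -> pos_dual y -> dual_disjoint f g ->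
  dual_le (rk_meet f y) (fun v => y v - rk_meet g y v).
Proof.
  intros Pf Pg Py [mf [mg [[_ [Hfm _]] [[_ [Hgm _]] [_ [_ Hinf]]]]]] v pv.
  set (k := fun w => (rk_meet f y w + rk_meet g y w) - y w).
  assert (Hk : is_dual k).
  { apply dual_sub; [|exact (proj1 Py)].
    apply dual_ext with (fun w => 1 * rk_meet f y w + 1 * rk_meet g y w); [intro; ring|].
    apply dual_lincomb; now apply rk_meet_is_dual. }
  assert (Hkf : dual_le k mf).
  { intros w pw. unfold k. pose proof (rk_meet_le_r g y Pg Py w pw).
    pose proof (rk_meet_le_l f y Pf Py w pw). pose proof (Hfm w pw). lra. }
  assert (Hkg : dual_le k mg).
  { intros w pw. unfold k. pose proof (rk_meet_le_r f y Pf Py w pw).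
    pose proof (rk_meet_le_l g y Pg Py w pw). pose proof (Hgm w pw). lra. }
  pose proof (Hinf k Hk Hkf Hkg v pv). unfold k in *. simpl in *. lra.
Qed.

Fixpoint sumR {A : Type} (F : A -> R) (l : list A) : R :=
  match l with nil => 0 | a :: t => F a + sumR F t end.

Lemma sumR_le {A : Type} (F G : A -> R) (l : list A) :
  (forall a, In a l -> F a <= G a) -> sumR F l <= sumR G l.
Proof.
  induction l as [|a t IH]; simpl; intros H; [lra|].
  pose proof (H a (or_introl eq_refl)). pose proof (IH (fun b Hb => H b (or_intror Hb))). lra.
Qed.

Lemma sumR_le_add_const {A : Type} (F G : A -> R) (c : R) (l : list A) :
  (forall a, In a l -> F a <= G a + c) -> sumR F l <= sumR G l + INR (length l) * c.
Proof.
  induction l as [|a t IH]; cbn [sumR length]; intros H; [simpl; lra|].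
  pose proof (H a (or_introl eq_refl)). pose proof (IH (fun b Hb => H b (or_intror Hb))).
  rewrite S_INR. lra.
Qed.

Lemma sumR_ge_const {A : Type} (F : A -> R) (c : R) (l : list A) :
  (forall a, In a l -> c <= F a) -> INR (length l) * c <= sumR F l.
Proof.
  induction l as [|a t IH]; cbn [sumR length]; intros H; [simpl; lra|].
  pose proof (H a (or_introl eq_refl)). pose proof (IH (fun b Hb => H b (or_intror Hb))).
  rewrite S_INR. lra.
Qed.

(* Induction on the list, replacing y by y - f ∧ y for the head f. *)
Lemma sum_disjoint_meets_le (l : list (E -> R)) :
  NoDup l -> (forall f, In f l -> pos_dual f) ->
  (forall f g, In f l -> In g l -> f <> g -> dual_disjoint f g) ->
  forall y, pos_dual y -> dual_le (fun u => sumR (fun f => rk_meet f y u) l) y.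
Proof.
  induction l as [|f rest IH]; intros Hnd Hp Hd y Py u pu; [exact (proj2 Py u pu)|].
  inversion Hnd as [|? ? Hnotin Hnd']; subst.
  pose proof (Hp f (or_introl eq_refl)) as Pf.
  set (y' := fun v => y v - rk_meet f y v).
  assert (Py' : pos_dual y').
  { split; [apply dual_sub; [exact (proj1 Py) | now apply rk_meet_is_dual]|].
    intros v pv. pose proof (rk_meet_le_r f y Pf Py v pv). unfold y'. simpl in *. lra. }
  pose proof (IH Hnd' (fun g H => Hp g (or_intror H))
                (fun g h H1 H2 => Hd g h (or_intror H1) (or_intror H2)) y' Py' u pu) as Hrest.
  assert (Hmono : sumR (fun g => rk_meet g y u) rest <= sumR (fun g => rk_meet g y' u) rest).
  { apply sumR_le. intros g Hg. pose proof (Hp g (or_intror Hg)) as Pg.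
    apply (rk_meet_greatest g y' Pg Py'); auto using rk_meet_is_dual, rk_meet_le_l.
    apply disjoint_meet_le_sub; auto.
    apply Hd; [right | left | intros ->]; auto. }
  simpl. unfold y' in *. lra.
Qed.

(* f - eps |b| lies below f and below z <= y, hence below f ∧ y. *)
Lemma le_meet_add_modulus (f y z b m : E -> R) (eps : R) (u : E) :
  pos_dual f -> pos_dual y -> 0 <= eps -> bl_zero ≼ u ->
  dual_le z y -> is_dual_modulus b m -> (forall v, f v = z v + eps * b v) ->
  f u <= rk_meet f y u + eps * m u.
Proof.
  intros Pf Py Heps pu Hzy Hm Hfe.
  pose proof (dual_modulus_ge0 b m Hm) as Hmpos.
  destruct Hm as [Hmd [Hbm _]].
  set (k := fun v => f v - eps * m v).
  assert (Hk : is_dual k).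
  { apply dual_sub; [exact (proj1 Pf)|].
    apply dual_ext with (fun v => eps * m v + 0 * m v); [intro; ring | now apply dual_lincomb]. }
  assert (Hkf : dual_le k f).
  { intros v pv. pose proof (Rmult_le_pos _ _ Heps (Hmpos v pv)). unfold k. simpl in *. lra. }
  assert (Hky : dual_le k y).
  { intros v pv. unfold k. rewrite Hfe. pose proof (Hzy v pv).
    pose proof (Rmult_le_compat_l _ _ _ Heps (Hbm v pv)). lra. }
  pose proof (rk_meet_greatest f y Pf Py k Hk Hkf Hky u pu). unfold k in *. lra.
Qed.

End DisjointMeets.

Theorem corollary3p5 (E : BanachLattice) (u0 : E) (delta : R)
    (D : (E -> R) -> Prop) :
  bl_le bl_zero u0 ->
  0 < delta ->
  (forall f, D f -> is_dual f /\ dual_pos f) ->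
  (forall f, D f -> delta <= f u0) ->
  almost_order_bounded u0 D ->
  exists M : nat,
    forall l : list (E -> R),
      NoDup l ->
      (forall f, In f l -> D f) ->
      (forall f g, In f l -> In g l -> f <> g -> dual_disjoint f g) ->
      (length l <= M)%nat.
Proof.
  intros pu0 Hdelta HD Hdelta_le Haob.
  destruct (Haob (delta / 2) ltac:(lra)) as [y [Hy [Hyp Hdecomp]]].
  assert (Py : pos_dual y) by now split.
  destruct (INR_unbounded (2 * y u0 / delta)) as [M HM].
  exists M. intros l Hnd Hin Hdis.
  assert (Hclose : forall f, In f l -> f u0 <= rk_meet f y u0 + delta / 2).
  { intros f Hf. pose proof (Hin f Hf) as Df.
    destruct (Hdecomp f Df) as [z [b [_ [_ [_ [Hzy [[m [Hm Hm1]] Hfe]]]]]]].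
    rewrite abs_of_ge0 in Hm1 by exact pu0.
    pose proof (le_meet_add_modulus f y z b m (delta / 2) u0 (HD f Df) Py
                  ltac:(lra) pu0 Hzy Hm Hfe).
    pose proof (Rmult_le_compat_l (delta / 2) _ _ ltac:(lra) Hm1). lra. }
  pose proof (sum_disjoint_meets_le l Hnd (fun f H => HD f (Hin f H)) Hdis y Py u0 pu0) as Hsum.
  pose proof (sumR_le_add_const _ _ _ l Hclose) as Hup.
  pose proof (sumR_ge_const (fun f => f u0) delta l (fun f H => Hdelta_le f (Hin f H))) as Hlow.
  apply INR_le. left. apply Rle_lt_trans with (2 * y u0 / delta); [|exact HM].
  apply Rmult_le_reg_r with delta; [exact Hdelta|].
  unfold Rdiv. rewrite Rmult_assoc, Rinv_l by lra. simpl in *. lra.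
Qed.
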